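(* In the online volunteer notification problem, under the index-based priority scheme and the sparse notification (SN) policy, for every volunteer $v\in[V]$, the expected number of tasks completed by $v$ is at least $J_{v,1}$.
   Context: Online volunteer notification problem. An instance consists of volunteers $[V]$, task types $[S]$, horizon $T$, arrival probabilities $\lambda_{s,t}\ge0$ with $\sum_{s=1}^S\lambda_{s,t}\le1$ (and $\lambda_{0,t}=1-\sum_s\lambda_{s,t}$), match probabilities $p_{v,s}\in[0,1]$, and a probability mass function $g$ on the positive integers with CDF $G(\tau)=\sum_{i\le\tau}g(i)$, $G(0)=0$. In each period $t$ at most one task arrives, of type $s$ with probability $\lambda_{s,t}$, independently across periods. All volunteers start active. Upon an arrival, the platform notifies a subset of volunteers; each notified active volunteer $v$ responds positively independently with probability $p_{v,s}$. A volunteer active and notified at time $t$ becomes inactive (regardless of response) and becomes active again at $t+Z$, $Z\sim g$ independent; inactive volunteers ignore notifications and are unaffected by them. Index-based priority scheme: if several notified active volunteers respond positively to a task, the one with the smallest index completes it. Ex ante solution $\mathbf{x}^*$: let $\mathcal{P}$ be the set of $\mathbf{x}$ with $0\le x_{v,s,t}\le1$ and $\sum_{\tau=1}^t\sum_s\lambda_{s,\tau}x_{v,s,\tau}(1-G(t-\tau))\le1$ for all $v,t$; $f(\mathbf{x})=\sum_{t,s}\lambda_{s,t}(1-\prod_v(1-x_{v,s,t}p_{v,s}))$; $\mathbf{x}^*_{LP}$ maximizes $\sum_{t,s}\lambda_{s,t}\min\{\sum_vx_{v,s,t}p_{v,s},1\}$ over $\mathcal{P}$; $\mathbf{x}^*_{AA}$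 is the output of: $\mathbf{x}^0=\mathbf{0}$, for $i=1..m$ ($m\in\mathbb{N}$) $\mathbf{y}^i\in\arg\max_{\mathbf{x}\in\mathcal{P}}\langle\mathbf{x},\nabla f(\mathbf{x}^{i-1})\rangle$, $\mathbf{x}^i=\mathbf{x}^{i-1}+\mathbf{y}^i/m$, output $\mathbf{x}^m$; $\mathbf{x}^*_{SQ}$ is built for $v=1..V$ in order with $(x^{SQ}_{v,s,t})_{s,t}$ optimal for $\max\sum_{t,s}\lambda_{s,t}\prod_{u<v}(1-p_{u,s}x^{SQ}_{u,s,t})p_{v,s}x_{v,s,t}$ s.t. $0\le x_{v,s,t}\le1$ and $\sum_{\tau\le t}\sum_s\lambda_{s,\tau}x_{v,s,\tau}(1-G(t-\tau))\le1$ for all $t$; $\mathbf{x}^*\in\arg\max_{\mathbf{x}\in\{\mathbf{x}^*_{LP},\mathbf{x}^*_{AA},\mathbf{x}^*_{SQ}\}}f(\mathbf{x})$. SN policy: offline, for $v=1,\dots,V$ in order: $r_{v,s,t}=p_{v,s}\prod_{u=1}^{v-1}(1-\tilde x_{u,s,t}p_{u,s})$; $J_{v,T+1}=0$; for $t=T$ down to $1$: $\tilde x_{v,s,t}=x^*_{v,s,t}\mathbb{I}\{r_{v,s,t}+\sum_{\tau=t+1}^Tg(\tau-t)J_{v,\tau}\ge J_{v,t+1}\}$ for $s\in[S]$ (with $\tilde x_{v,0,t}=r_{v,0,t}=0$), and $J_{v,t}=\sum_{s=0}^S\lambda_{s,t}\big((1-\tilde x_{v,s,t})J_{v,t+1}+\tilde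 x_{v,s,t}(r_{v,s,t}+\sum_{\tau=t+1}^Tg(\tau-t)J_{v,\tau})\big)$. Online: when a task of type $s$ arrives at time $t$, each volunteer $v$ is notified independently with probability $\tilde x_{v,s,t}$. *)

From HB Require Import structures.
From mathcomp Require Import all_boot all_order all_algebra.
From mathcomp Require Import reals.
Set Implicit Arguments. Unset Strict Implicit. Unset Printing Implicit Defensive.
Import Order.TTheory GRing.Theory Num.Theory.
Local Open Scope ring_scope.

(* Conventions: volunteers [V] = 'I_V (smaller ordinal = higher priority),
   task types [S] = 'I_S (type 0 = "no task" is implicit, with probability
   1 - sum_s lam s t), periods t = 1..T (nat).  Solutions x are functions
   'I_V -> 'I_S -> nat -> R; only t in 1..T matters. *)

Section Online.
Variables (R : realType) (V S T : nat).
Variables (lam : 'I_S -> nat -> R) (p : 'I_V -> 'I_S -> R) (g : nat -> R).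

Definition sol := 'I_V -> 'I_S -> nat -> R.

Definition pmf_pos : Prop :=
  g 0%N = 0 /\ (forall i, 0 <= g i) /\
  (forall n, \sum_(i < n) g i <= 1) /\
  (forall e, 0 < e -> exists n, 1 - e < \sum_(i < n) g i).

Definition Gcdf (n : nat) : R := \sum_(1 <= i < n.+1) g i.

Definition row_feasible (y : 'I_S -> nat -> R) : Prop :=
  (forall s t, (1 <= t <= T)%N -> 0 <= y s t <= 1) /\
  (forall t, (1 <= t <= T)%N ->
     \sum_(1 <= tau < t.+1) \sum_(s < S) lam s tau * y s tau * (1 - Gcdf (t - tau))
       <= 1).

Definition Pset (x : sol) : Prop := forall v, row_feasible (x v).

Definition f_obj (x : sol) : R :=
  \sum_(1 <= t < T.+1) \sum_(s < S)
     lam s t * (1 - \prod_(v < V) (1 - x v s t * p v s)).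

Definition f_LP (x : sol) : R :=
  \sum_(1 <= t < T.+1) \sum_(s < S)
     lam s t * Num.min (\sum_(v < V) x v s t * p v s) 1.

Definition is_xLP (x : sol) : Prop :=
  Pset x /\ forall y, Pset y -> f_LP y <= f_LP x.

Definition grad_f (x : sol) : sol := fun v s t =>
  lam s t * p v s * \prod_(u < V | u != v) (1 - x u s t * p u s).

Definition inner (x y : sol) : R :=
  \sum_(v < V) \sum_(s < S) \sum_(1 <= t < T.+1) x v s t * y v s t.

(* output of the continuous-greedy / Frank-Wolfe scheme with some m >= 1 *)
Definition is_xAA (x : sol) : Prop :=
  exists (m : nat) (xs ys : nat -> sol),
    (0 < m)%N /\
    xs 0%N = (fun _ _ _ => 0) /\
    (forall i, (1 <= i <= m)%N ->
       Pset (ys i) /\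
       (forall z, Pset z -> inner z (grad_f (xs i.-1)) <= inner (ys i) (grad_f (xs i.-1))) /\
       xs i = (fun v s t => xs i.-1 v s t + ys i v s t / m%:R)) /\
    x = xs m.

Definition sq_obj (x : sol) (v : 'I_V) (y : 'I_S -> nat -> R) : R :=
  \sum_(1 <= t < T.+1) \sum_(s < S)
    lam s t * (\prod_(u < V | (u < v)%N) (1 - p u s * x u s t)) * p v s * y s t.

Definition is_xSQ (x : sol) : Prop :=
  forall v, row_feasible (x v) /\
    forall y, row_feasible y -> sq_obj x v y <= sq_obj x v (x v).

Definition is_xstar (xs : sol) : Prop :=
  exists xLP xAA xSQ : sol,
    is_xLP xLP /\ is_xAA xAA /\ is_xSQ xSQ /\
    (xs = xLP \/ xs = xAA \/ xs = xSQ) /\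
    f_obj xLP <= f_obj xs /\ f_obj xAA <= f_obj xs /\ f_obj xSQ <= f_obj xs.

Definition r_SN (xt : sol) (v : 'I_V) (s : 'I_S) (t : nat) : R :=
  p v s * \prod_(u < V | (u < v)%N) (1 - xt u s t * p u s).

Definition cont (J : 'I_V -> nat -> R) (v : 'I_V) (t : nat) : R :=
  \sum_(t.+1 <= tau < T.+1) g (tau - t) * J v tau.

(* xt and J are the (uniquely determined) quantities computed by SN from xstar *)
Definition SN_offline (xstar xt : sol) (J : 'I_V -> nat -> R) : Prop :=
  forall v : 'I_V,
    J v T.+1 = 0 /\
    forall t, (1 <= t <= T)%N ->
      (forall s, xt v s t =
         (if J v t.+1 <= r_SN xt v s t + cont J v t then xstar v s t else 0)) /\
      J v t = (1 - \sum_(s < S) lam s t) * J v t.+1 +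
              \sum_(s < S) lam s t *
                 ((1 - xt v s t) * J v t.+1 + xt v s t * (r_SN xt v s t + cont J v t)).

(* State: for each volunteer, the period at which it is (again) active
   (active at t iff state u <= t).  A return time beyond the horizon is
   recorded as T+1. *)
Definition state := {ffun 'I_V -> 'I_(T.+2)}.

(* law of min(t + Z, T+1), Z ~ g *)
Definition ret_w (t r : nat) : R :=
  if (t < r <= T)%N then g (r - t)
  else if r == T.+1 then 1 - Gcdf (T - t) else 0.

Definition trans_w (t : nat) (Act : {set 'I_V}) (sg rho : state) : R :=
  \prod_(u < V) (if u \in Act then ret_w t (rho u) else (rho u == sg u)%:R).

(* expected number of tasks completed by v during periods t, ..., t+n-1,
   starting from state sg at period t, when each volunteer is notified of a
   type-s task at time t independently with probability xt u s t *)
Fixpoint EV (xt : sol) (v : 'I_V) (n t : nat) (sg : state) : R :=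
  match n with
  | 0%N => 0
  | n'.+1 =>
    (1 - \sum_(s < S) lam s t) * EV xt v n' t.+1 sg +
    \sum_(s < S) lam s t *
      \sum_(N : {set 'I_V})
        ((\prod_(u in N) xt u s t) * \prod_(u in ~: N) (1 - xt u s t)) *
        (let Act := [set u in N | (sg u <= t)%N] in
         (\sum_(A : {set 'I_V} | A \subset Act)
            ((\prod_(u in A) p u s) * \prod_(u in Act :\: A) (1 - p u s)) *
            ((v \in A) && [forall u in A, (v <= u)%N])%:R)
         + \sum_(rho : state) trans_w t Act sg rho * EV xt v n' t.+1 rho)
  end.

Definition init_state : state := [ffun _ => ord0].

Definition expected_completed (xt : sol) (v : 'I_V) : R :=
  EV xt v T 1 init_state.

End Online.

From HB Require Import structures.
From mathcomp Require Import all_boot all_order all_algebra.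
From mathcomp Require Import reals ring lra.
Import Order.TTheory GRing.Theory Num.Theory.
Set Implicit Arguments. Unset Strict Implicit. Unset Printing Implicit Defensive.
Local Open Scope ring_scope.

(* Fix v and argue backwards in time: from any state, the expected number of
   tasks v completes from period t on is at least J_{v,t'}, where t' >= t is the
   first period at which v is active.  If v is active and notified of a type-s
   task, it completes it with probability p_v * prod (1 - p_u) over the notified
   ACTIVE u < v; this dominates r_{v,s,t} = p_v * prod_{u<v} (1 - x_u p_u), since
   inactive volunteers are not competitors.  Afterwards v returns at t + Z with
   Z ~ g independently of everybody else, so its continuation value is exactly
   sum_tau g(tau - t) J_{v,tau}.  Notifications are independent Bernoulli
   trials, so all these expectations factor over the volunteers. *)

Section IndependentBernoulli.
Variables (R : comNzRingType) (I : finType).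

Lemma sum_set_prod (w : I -> bool -> R) :
  \sum_(N : {set I}) \prod_i w i (i \in N) = \prod_i (w i true + w i false).
Proof.
rewrite bigA_distr; apply: eq_bigr => N _; apply: eq_bigr => i _.
by case: (i \in N).
Qed.

Lemma bernoulli_weightE (x : I -> R) (N : {set I}) :
  (\prod_(u in N) x u) * \prod_(u in ~: N) (1 - x u)
  = \prod_u (if u \in N then x u else 1 - x u).
Proof.
rewrite (big_mkcond (mem N)) (big_mkcond (mem (~: N))) -big_split /=.
by apply: eq_bigr => u _; rewrite in_setC; case: (u \in N); rewrite ?mulr1 ?mul1r.
Qed.

Lemma expect_indep_prod (x : I -> R) (F : I -> bool -> R) :
  \sum_(N : {set I}) ((\prod_(u in N) x u) * \prod_(u in ~: N) (1 - x u)) *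
                     \prod_i F i (i \in N)
  = \prod_i (x i * F i true + (1 - x i) * F i false).
Proof.
transitivity (\sum_(N : {set I}) \prod_i ((if i \in N then x i else 1 - x i) * F i (i \in N))).
  by apply: eq_bigr => N _; rewrite bernoulli_weightE -big_split.
exact: (sum_set_prod (fun i b => (if b then x i else 1 - x i) * F i b)).
Qed.

Lemma expect_indep_single (x : I -> R) (v : I) (F : bool -> R) :
  \sum_(N : {set I}) ((\prod_(u in N) x u) * \prod_(u in ~: N) (1 - x u)) * F (v \in N)
  = x v * F true + (1 - x v) * F false.
Proof.
pose G i b := if i == v then F b else 1.
have focus (h : I -> bool) : \prod_i G i (h i) = F (h v).
  by rewrite (bigD1 v) //= /G eqxx big1 ?mulr1 // => i /negbTE ->.
under eq_bigr => N _ do rewrite -(focus (fun i => i \in N)).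
rewrite expect_indep_prod (bigD1 v) //= /G eqxx big1 ?mulr1 // => i /negbTE ->.
by rewrite !mulr1 addrC subrK.
Qed.

Lemma bernoulli_weight_restrict (q : I -> R) (B A : {set I}) :
  (\prod_(u in A) ((u \in B)%:R * q u)) * \prod_(u in ~: A) (1 - (u \in B)%:R * q u)
  = if A \subset B then (\prod_(u in A) q u) * \prod_(u in B :\: A) (1 - q u) else 0.
Proof.
rewrite bernoulli_weightE; case: (boolP (A \subset B)) => [/subsetP AB | /subsetPn [i iA niB]].
  rewrite (big_mkcond (mem A)) (big_mkcond (mem (B :\: A))) -big_split /=.
  apply: eq_bigr => i _; rewrite in_setD.
  case iA: (i \in A); first by rewrite AB ?mul1r ?mulr1.
  by case: (i \in B); rewrite /= ?mul1r ?mul0r ?subr0.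
by rewrite (bigD1 i) //= iA (negbTE niB) !mul0r.
Qed.

End IndependentBernoulli.

Section FirstResponder.
Variables (R : comNzRingType) (n : nat).
Implicit Types (q a : 'I_n -> R) (v : 'I_n).

Lemma prod_priority a v :
  \prod_i (if i == v then a i else if (i < v)%N then 1 - a i else 1)
  = a v * \prod_(i < n | (i < v)%N) (1 - a i).
Proof.
rewrite (bigD1 v) //= eqxx; congr (_ * _).
rewrite big_mkcond [RHS]big_mkcond; apply: eq_bigr => i _.
by case: eqP => [->|_]; rewrite ?ltnn.
Qed.

Lemma min_indicator_prod (A : {set 'I_n}) v :
  ((v \in A) && [forall u in A, (v <= u)%N])%:R
  = \prod_i (if i == v then (i \in A)%:R else if (i < v)%N then (i \notin A)%:R else 1) :> R.
Proof.
case: (boolP (_ && _)) => [/andP [vA /forallP lo] | ].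
  rewrite big1 // => i _; case: eqP => [->|_]; first by rewrite vA.
  case: ltnP => // iv; case iA: (i \in A) => //.
  by have := lo i; rewrite iA /= leqNgt iv.
rewrite negb_and => /orP [nvA | /forallPn [u]].
  by rewrite (bigD1 v) //= eqxx (negbTE nvA) mul0r.
rewrite negb_imply -ltnNge => /andP [uA uv].
have une : (u == v) = false by apply: contraTF uv => /eqP ->; rewrite ltnn.
by rewrite (bigD1 u) //= une uv uA mul0r.
Qed.

Lemma first_responder_prob q (B : {set 'I_n}) v :
  \sum_(A : {set 'I_n} | A \subset B)
     ((\prod_(u in A) q u) * \prod_(u in B :\: A) (1 - q u)) *
     ((v \in A) && [forall u in A, (v <= u)%N])%:R
  = (v \in B)%:R * q v * \prod_(u < n | (u < v)%N) (1 - (u \in B)%:R * q u).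
Proof.
transitivity (\sum_(A : {set 'I_n})
   ((\prod_(u in A) ((u \in B)%:R * q u)) * \prod_(u in ~: A) (1 - (u \in B)%:R * q u)) *
   \prod_i (if i == v then (i \in A)%:R else if (i < v)%N then (i \notin A)%:R else 1)).
  rewrite big_mkcond; apply: eq_bigr => A _.
  by rewrite bernoulli_weight_restrict min_indicator_prod; case: ifP; rewrite ?mul0r.
rewrite (expect_indep_prod _ (fun i (b : bool) =>
  if i == v then b%:R else if (i < v)%N then (~~ b)%:R else 1 : R)) -prod_priority.
by apply: eq_bigr => i _; case: eqP => _; [|case: ifP => _]; rewrite /=; ring.
Qed.

Lemma expected_first_responder q (x : 'I_n -> R) (al : pred 'I_n) v :
  \sum_(N : {set 'I_n}) ((\prod_(u in N) x u) * \prod_(u in ~: N) (1 - x u)) *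
     ((v \in [set u in N | al u])%:R * q v *
      \prod_(u < n | (u < v)%N) (1 - (u \in [set u in N | al u])%:R * q u))
  = x v * (al v)%:R * q v * \prod_(u < n | (u < v)%N) (1 - x u * (al u)%:R * q u).
Proof.
under eq_bigr => N _ do rewrite -(prod_priority (fun u => (u \in [set u in N | al u])%:R * q u)).
rewrite -prod_priority.
transitivity (\sum_(N : {set 'I_n}) ((\prod_(u in N) x u) * \prod_(u in ~: N) (1 - x u)) *
   \prod_i (if i == v then ((i \in N) && al i)%:R * q i
            else if (i < v)%N then 1 - ((i \in N) && al i)%:R * q i else 1)).
  by apply: eq_bigr => N _; congr (_ * _); apply: eq_bigr => i _; rewrite inE.
rewrite (expect_indep_prod x (fun i b => if i == v then (b && al i)%:R * q i
            else if (i < v)%N then 1 - (b && al i)%:R * q i else 1)).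
by apply: eq_bigr => i _; case: eqP => _; [|case: ifP => _]; rewrite /=; ring.
Qed.

End FirstResponder.

Lemma bernoulli_weight_ge0 (R : numDomainType) (I : finType) (x : I -> R) (N : {set I}) :
  (forall i, 0 <= x i <= 1) -> 0 <= (\prod_(u in N) x u) * \prod_(u in ~: N) (1 - x u).
Proof.
move=> x01; apply: mulr_ge0; apply: prodr_ge0 => u _; have /andP [x0 x1] := x01 u.
  exact: x0.
by rewrite subr_ge0.
Qed.

Lemma first_responder_lb (R : realDomainType) (n : nat) (x q : 'I_n -> R)
    (al : pred 'I_n) (v : 'I_n) :
  (forall i, 0 <= x i <= 1) -> (forall i, 0 <= q i <= 1) ->
  x v * (al v)%:R * (q v * \prod_(u < n | (u < v)%N) (1 - x u * q u))
  <= x v * (al v)%:R * q v * \prod_(u < n | (u < v)%N) (1 - x u * (al u)%:R * q u).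
Proof.
move=> x01 q01; have /andP [xv0 _] := x01 v; have /andP [qv0 _] := q01 v.
rewrite -!mulrA; do 3 (apply: ler_wpM2l => //); apply: ler_prod => i _.
have /andP [xi0 xi1] := x01 i; have /andP [qi0 qi1] := q01 i.
by case: (al i); rewrite /= ?mulr1 ?mulr0 ?mul0r; apply/andP; split; nra.
Qed.

Section ReturnTime.
Variables (R : realType) (T : nat) (g : nat -> R).

Lemma Gcdf_le1 k : pmf_pos g -> Gcdf g k <= 1.
Proof.
case=> g0 [_ [gsum_le1 _]].
suff <- : \sum_(i < k.+1) g i = Gcdf g k by apply: gsum_le1.
by rewrite /Gcdf -(big_mkord xpredT g) big_ltn // g0 add0r.
Qed.

Lemma ret_w_ge0 t r : pmf_pos g -> 0 <= ret_w T g t r.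
Proof.
move=> g_pmf; rewrite /ret_w; case: ifP => _; first by case: g_pmf => _ [].
by case: ifP => _ //; rewrite subr_ge0 Gcdf_le1.
Qed.

Lemma sum_g_shift t : (t <= T)%N ->
  \sum_(t.+1 <= r < T.+1) g (r - t)%N = Gcdf g (T - t)%N.
Proof.
move=> tT; rewrite /Gcdf -[t.+1]add1n big_addn subSn //.
by apply: eq_bigr => i _; rewrite addnK.
Qed.

Lemma sum_ret_w_mul t (F : nat -> R) : (t <= T)%N ->
  \sum_(r < T.+2) ret_w T g t r * F r =
  \sum_(t.+1 <= r < T.+1) g (r - t)%N * F r + (1 - Gcdf g (T - t)%N) * F T.+1.
Proof.
move=> tT.
have ret_before r : (r <= t)%N -> ret_w T g t r = 0.
  move=> rt; rewrite /ret_w ltnNge rt /= ifN_eq //.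
  by rewrite ltn_eqF // ltnS (leq_trans rt).
have ret_top : ret_w T g t T.+1 = 1 - Gcdf g (T - t)%N.
  by rewrite /ret_w ltnn andbF eqxx.
rewrite -(big_mkord xpredT (fun r => ret_w T g t r * F r)) big_nat_recr //= ret_top.
rewrite (@big_cat_nat _ _ _ t.+1) //= big_nat_cond big1 ?add0r; last first.
  by move=> r /andP [/andP [_ rt] _]; rewrite ret_before ?mul0r.
congr (_ + _); apply: eq_big_nat => r /andP [tr rT].
by rewrite /ret_w tr -ltnS rT.
Qed.

Lemma sum_ret_w t : (t <= T)%N -> \sum_(r < T.+2) ret_w T g t r = 1.
Proof.
move=> tT; have := sum_ret_w_mul (fun _ => 1) tT.
under eq_bigr do rewrite mulr1; move=> ->.
by under eq_big_nat do rewrite mulr1; rewrite sum_g_shift // mulr1 addrC subrK.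
Qed.

Lemma sum_ret_w_cont V (J : 'I_V -> nat -> R) v t : (t <= T)%N -> J v T.+1 = 0 ->
  \sum_(r < T.+2) ret_w T g t r * J v (maxn t.+1 r) = cont T g J v t.
Proof.
move=> tT J0; rewrite (sum_ret_w_mul (fun r => J v (maxn t.+1 r)) tT).
rewrite (maxn_idPr _) ?ltnS // J0 mulr0 addr0.
by apply: eq_big_nat => r /andP [tr _]; rewrite (maxn_idPr tr).
Qed.

Section Transitions.
Variable V : nat.
Implicit Types (sg rho : state V T) (Act : {set 'I_V}).

Lemma trans_w_ge0 t Act sg rho : pmf_pos g -> 0 <= trans_w g t Act sg rho.
Proof.
move=> g_pmf; apply: prodr_ge0 => u _.
by case: ifP => _; [exact: ret_w_ge0 | rewrite ler0n].
Qed.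

Lemma sum_trans_w_marginal t Act sg v (h : nat -> R) : (t <= T)%N ->
  \sum_rho trans_w g t Act sg rho * h (rho v) =
  if v \in Act then \sum_(r < T.+2) ret_w T g t r * h r else h (sg v).
Proof.
move=> tT.
pose W u (r : 'I_T.+2) := (if u \in Act then ret_w T g t r else (r == sg u)%:R) *
   (if u == v then h r else 1).
have point_mass u (F : 'I_T.+2 -> R) : \sum_r (r == sg u)%:R * F r = F (sg u).
  by rewrite (bigD1 (sg u)) //= eqxx mul1r big1 ?addr0 // => r /negbTE ->; rewrite mul0r.
transitivity (\sum_(rho : {ffun 'I_V -> 'I_T.+2}) \prod_u W u (rho u)).
  apply: eq_bigr => rho _; rewrite /trans_w /W big_split /=; congr (_ * _).
  by rewrite (bigD1 v) //= eqxx big1 ?mulr1 // => u /negbTE ->.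
rewrite -bigA_distr_bigA (bigD1 v) //= [X in _ * X]big1 ?mulr1; last first.
  move=> u /negbTE uv; rewrite /W uv; case: (u \in Act).
    by under eq_bigr do rewrite mulr1; rewrite sum_ret_w.
  by rewrite (point_mass u (fun=> 1)).
by rewrite /W eqxx; case: (v \in Act); rewrite ?(point_mass v (fun r => h r)).
Qed.

End Transitions.
End ReturnTime.

Section SNLowerBound.
Variables (R : realType) (V S T : nat).
Variables (lam : 'I_S -> nat -> R) (p : 'I_V -> 'I_S -> R) (g : nat -> R).
Variables (xstar xt : sol R V S) (J : 'I_V -> nat -> R).
Hypothesis lam_ge0 : forall s t, 0 <= lam s t.
Hypothesis lam_sum_le1 : forall t, \sum_(s < S) lam s t <= 1.
Hypothesis p_prob : forall v s, 0 <= p v s <= 1.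
Hypothesis g_pmf : pmf_pos g.
Hypothesis xt_prob : forall u s t, (1 <= t <= T)%N -> 0 <= xt u s t <= 1.
Hypothesis SN : SN_offline T lam p g xstar xt J.

Lemma SN_value_at_state v t (sg : state V T) : (1 <= t <= T)%N ->
  let h := J v (maxn t.+1 (sg v)) in
  J v (maxn t (sg v)) = (1 - \sum_(s < S) lam s t) * h +
    \sum_(s < S) lam s t *
      (xt v s t * (if (sg v <= t)%N then r_SN p xt v s t + cont T g J v t else h)
       + (1 - xt v s t) * h).
Proof.
move=> tT h; have [_ /(_ t tT) [_ Jt]] := SN v.
case: (leqP (sg v) t) => [active | idle].
  rewrite /h (maxn_idPl (leqW active)) Jt; congr (_ + _).
  by apply: eq_bigr => s _; ring.
rewrite /h (maxn_idPr idle).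
have stay s : lam s t * (xt v s t * J v (sg v) + (1 - xt v s t) * J v (sg v))
              = lam s t * J v (sg v) by ring.
by rewrite (eq_bigr _ (fun s _ => stay s)) -big_distrl /=; ring.
Qed.

Lemma expected_immediate_reward_ge (s : 'I_S) t (sg : state V T) v : (1 <= t <= T)%N ->
  xt v s t * ((sg v <= t)%N)%:R * r_SN p xt v s t <=
  \sum_(N : {set 'I_V}) ((\prod_(u in N) xt u s t) * \prod_(u in ~: N) (1 - xt u s t)) *
    \sum_(A : {set 'I_V} | A \subset [set u in N | (sg u <= t)%N])
      ((\prod_(u in A) p u s) *
       \prod_(u in [set u in N | (sg u <= t)%N] :\: A) (1 - p u s)) *
      ((v \in A) && [forall u in A, (v <= u)%N])%:R.
Proof.
move=> tT; under eq_bigr => N _ do rewrite first_responder_prob.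
rewrite (expected_first_responder (fun u => p u s) _ (fun u => (sg u <= t)%N)).
by apply: first_responder_lb => u; [exact: xt_prob | exact: p_prob].
Qed.

Lemma expected_continuation_ge (s : 'I_S) t (sg : state V T) v (E : state V T -> R) :
  (1 <= t <= T)%N -> (forall rho : state V T, J v (maxn t.+1 (rho v)) <= E rho) ->
  xt v s t * (if (sg v <= t)%N then cont T g J v t else J v (maxn t.+1 (sg v)))
    + (1 - xt v s t) * J v (maxn t.+1 (sg v)) <=
  \sum_(N : {set 'I_V}) ((\prod_(u in N) xt u s t) * \prod_(u in ~: N) (1 - xt u s t)) *
    \sum_(rho : state V T) trans_w g t [set u in N | (sg u <= t)%N] sg rho * E rho.
Proof.
move=> tT JE; have /andP [_ t_le_T] := tT; have [J0 _] := SN v.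
rewrite -[X in X <= _](expect_indep_single (fun u => xt u s t) v (fun b =>
  if b && (sg v <= t)%N then cont T g J v t else J v (maxn t.+1 (sg v)))).
apply: ler_sum => N _; apply: ler_wpM2l.
  by apply: bernoulli_weight_ge0 => u; apply: xt_prob.
have -> : (v \in N) && (sg v <= t)%N = (v \in [set u in N | (sg u <= t)%N]) by rewrite inE.
rewrite -(sum_ret_w_cont g t_le_T J0).
rewrite -[X in X <= _](sum_trans_w_marginal _ _ _ _ (fun r => J v (maxn t.+1 r)) t_le_T).
by apply: ler_sum => rho _; apply: ler_wpM2l => //; apply: trans_w_ge0.
Qed.

Lemma J_le_EV v k t (sg : state V T) : (t + k)%N = T.+1 -> (1 <= t)%N ->
  J v (maxn t (sg v)) <= EV lam p g xt v k t sg.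
Proof.
elim: k t sg => [|k IH] t sg tk t1.
  have [J0 _] := SN v; rewrite addn0 in tk; subst t.
  by rewrite (maxn_idPl _) ?J0 // -ltnS ltn_ord.
have tT : (1 <= t <= T)%N by rewrite t1 -ltnS -tk addnS ltnS leq_addr.
have IHt (rho : state V T) : J v (maxn t.+1 (rho v)) <= EV lam p g xt v k t.+1 rho.
  by apply: IH; rewrite ?addSnnS.
rewrite (SN_value_at_state v sg tT) /=; apply: lerD.
  by apply: ler_wpM2l => //; rewrite subr_ge0.
apply: ler_sum => s _; apply: ler_wpM2l => //.
under eq_bigr do rewrite mulrDr; rewrite big_split /=.
have imm := expected_immediate_reward_ge s sg v tT.
have cnt := expected_continuation_ge s sg tT IHt.
by case: (sg v <= t)%N in imm cnt *; rewrite /= ?mulr1 ?mulr0 in imm *; lra.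
Qed.

End SNLowerBound.

Section NotificationProbabilities.
Variables (R : realType) (V S T : nat).
Variables (lam : 'I_S -> nat -> R) (p : 'I_V -> 'I_S -> R) (g : nat -> R).

Lemma xAA_entry_bounds (x : sol R V S) : is_xAA T lam p g x ->
  forall u s t, (1 <= t <= T)%N -> 0 <= x u s t <= 1.
Proof.
case=> m [xs [ys [m_gt0 [xs0 [step ->]]]]] u s t tT.
have m_pos : 0 < m%:R :> R by rewrite ltr0n.
suff iter_bounds i : (i <= m)%N -> 0 <= xs i u s t <= i%:R / m%:R.
  have /andP [-> le_1] := iter_bounds m (leqnn m).
  by rewrite (le_trans le_1) // divff // gt_eqF.
elim: i => [|i IH] im; first by rewrite xs0 mul0r lexx.
have [Py [_ ->]] := step i.+1 im.
have [y01 _] := Py u; have /andP [y0 y1] := y01 s t tT.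
have /andP [a0 a1] := IH (ltnW im).
have y_le : ys i.+1 u s t / m%:R <= 1 / m%:R by rewrite ler_wpM2r // invr_ge0 ltW.
have y_ge0 : 0 <= ys i.+1 u s t / m%:R by rewrite divr_ge0 // ltW.
by rewrite mulrSr mulrDl; apply/andP; split; lra.
Qed.

Lemma xstar_entry_bounds (x : sol R V S) : is_xstar T lam p g x ->
  forall u s t, (1 <= t <= T)%N -> 0 <= x u s t <= 1.
Proof.
case=> [xLP [xAA [xSQ [[LP _] [AA [SQ [choice _]]]]]]] u s t tT.
case: choice => [->|[->|->]].
- by have [xLP01 _] := LP u; apply: xLP01.
- exact: xAA_entry_bounds.
- by have [[xSQ01 _] _] := SQ u; apply: xSQ01.
Qed.

Lemma SN_notification_bounds (xstar xt : sol R V S) (J : 'I_V -> nat -> R) :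
  is_xstar T lam p g xstar -> SN_offline T lam p g xstar xt J ->
  forall u s t, (1 <= t <= T)%N -> 0 <= xt u s t <= 1.
Proof.
move=> xstar_opt SN u s t tT; have [_ /(_ t tT) [-> _]] := SN u.
by case: ifP => _; [exact: xstar_entry_bounds | rewrite lexx ler01].
Qed.

End NotificationProbabilities.

Theorem lemma2 (R : realType) (V S T : nat)
  (lam : 'I_S -> nat -> R) (p : 'I_V -> 'I_S -> R) (g : nat -> R)
  (xstar xt : 'I_V -> 'I_S -> nat -> R) (J : 'I_V -> nat -> R) :
  (forall s t, 0 <= lam s t) ->
  (forall t, \sum_(s < S) lam s t <= 1) ->
  (forall v s, 0 <= p v s <= 1) ->
  pmf_pos g ->
  is_xstar T lam p g xstar ->
  SN_offline T lam p g xstar xt J ->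
  forall v : 'I_V, J v 1%N <= expected_completed T lam p g xt v.
Proof.
move=> lam_ge0 lam_sum_le1 p_prob g_pmf xstar_opt SN v.
have xt_prob := SN_notification_bounds xstar_opt SN.
have := J_le_EV lam_ge0 lam_sum_le1 p_prob g_pmf xt_prob SN v (init_state V T)
  (add1n T) (leqnn 1).
by rewrite ffunE.
Qed.
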